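(* Let $n$, $k$, $t$ be positive integers with $k\geq t+1$ and $n\geq 2k$, and let $V$ be an $n$-dimensional vector space over $\mathbb{F}_q$. Suppose $\mathcal{F}\subseteq{V\brack k}$ is almost $t$-intersecting. If $A$ is a subspace of $V$ with $\dim(A)<\tau_t(\mathcal{F})\leq k$, then $$|\mathcal{F}_A|\leq{k-t+1\brack 1}^{\tau_t(\mathcal{F})-\dim(A)}{n-\tau_t(\mathcal{F})\brack k-\tau_t(\mathcal{F})}+\sum_{i=0}^{\tau_t(\mathcal{F})-\dim(A)-1}{k-t+1\brack 1}^{i}.$$
   Context: $q$ is a prime power; ${W\brack k}$ is the set of $k$-dimensional subspaces of $W$ and ${m\brack r}$ the Gaussian binomial coefficient $\prod_{i=0}^{r-1}\frac{q^{m-i}-1}{q^{r-i}-1}$ (equal to $1$ for $r=0$). A family $\mathcal{F}\subseteq{V\brack k}$ is almost $t$-intersecting if for each $F\in\mathcal{F}$ there is at most one $F'\in\mathcal{F}$ with $\dim(F\cap F')<t$. A subspace $W$ is a $t$-cover of $\mathcal{F}$ if $\dim(W\cap F)\geq t$ for all $F\in\mathcal{F}$; $\tau_t(\mathcal{F})$ is the minimum dimension of a $t$-cover of $\mathcal{F}$. $\mathcal{F}_A=\{F\in\mathcal{F}: A\subseteq F\}$. *)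

From HB Require Import structures.
From mathcomp Require Import all_boot all_order all_algebra.
Set Implicit Arguments. Unset Strict Implicit. Unset Printing Implicit Defensive.
Import Order.TTheory GRing.Theory Num.Theory.

(* V = 'rV[K]_n for a finite field K with q = #|K|. *)

Import VectorInternalTheory.
Section Fin.
Variables (K : finFieldType) (n : nat).
HB.instance Definition _ := [Countable of {vspace 'rV[K]_n} by <:].
HB.instance Definition _ := [Finite of {vspace 'rV[K]_n} by <:].
End Fin.

Local Open Scope ring_scope.

(* Gaussian binomial coefficient [m brack r]_q, as a rational number:
   prod_{i<r} (q^(m-i) - 1) / (q^(r-i) - 1)   (= 1 for r = 0) *)
Definition gbin (q m r : nat) : rat :=
  \prod_(i < r) (((q ^ (m - i))%:R - 1) / ((q ^ (r - i))%:R - 1)).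

Section Families.
Variables (K : finFieldType) (n : nat).
Local Notation V := 'rV[K]_n.

Definition k_uniform (Fam : {set {vspace V}}) (k : nat) : Prop :=
  forall F, F \in Fam -> \dim F = k.

Definition almost_t_intersecting (Fam : {set {vspace V}}) (t : nat) : Prop :=
  forall F, F \in Fam -> (#|[set F' in Fam | \dim (F :&: F')%VS < t]| <= 1)%N.

Definition t_cover (Fam : {set {vspace V}}) (t : nat) (W : {vspace V}) : bool :=
  [forall F in Fam, t <= \dim (W :&: F)%VS]%N.

(* tau_t(Fam): minimum dimension of a t-cover (n.+1 if there is none, which
   never happens when all members have dimension >= t, since fullv covers) *)
Definition tau (Fam : {set {vspace V}}) (t : nat) : nat :=
  \big[minn/n.+1]_(W : {vspace V} | t_cover Fam t W) \dim W.

Definition fam_A (Fam : {set {vspace V}}) (A : {vspace V}) : {set {vspace V}} :=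
  [set F in Fam | (A <= F)%VS].

End Families.

From HB Require Import structures.
From mathcomp Require Import all_boot all_order all_algebra all_field zify ring.
Import Order.TTheory GRing.Theory Num.Theory.
Set Implicit Arguments. Unset Strict Implicit. Unset Printing Implicit Defensive.

(* Induction on tau_t(Fam) - dim A.  If dim A = tau_t(Fam), every member of Fam_A
   is a k-space containing A, and there are at most [n - tau brack k - tau] of them.
   Otherwise A is not a t-cover: some F in Fam has dim (A :&: F) < t, so F contains
   a (k - t + 1)-space S meeting A trivially.  Every G in Fam_A with
   dim (F :&: G) >= t meets S in a line P, since both live in the k-space F, hence
   G lies in Fam_(A + P); almost t-intersection leaves at most one other G.  So
   |Fam_A| <= 1 + [k - t + 1 brack 1] * max_P |Fam_(A + P)|, which unrolls to the
   bound.  The Gaussian bound on the subspaces between A and U comes from double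
   counting the pairs (W, v) with v in W \ A. *)

Lemma sum_card_incidence (I T : finType) (X : {set I}) (R : I -> {pred T}) :
  \sum_(i in X) #|R i| = \sum_x #|[set i in X | x \in R i]|.
Proof.
under eq_bigr do rewrite -sum1_card.
rewrite (exchange_big_dep predT) //=; apply: eq_bigr => x _.
by rewrite -sum1_card; apply: eq_bigl => i; rewrite inE.
Qed.

Lemma card_bigcup_le (I T : finType) (L : {set I}) (Y : I -> {set T}) :
  #|\bigcup_(i in L) Y i| <= \sum_(i in L) #|Y i|.
Proof.
elim/big_rec2: _ => [|i B s _ IH]; first by rewrite cards0.
by rewrite (leq_trans (leq_card_setU _ _).1) ?leq_add2l.
Qed.

Section GaussianBinomial.
Local Open Scope ring_scope.

Lemma gbin_ge0 q m r : (0 < q)%N -> 0 <= gbin q m r.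
Proof.
move=> q_gt0; apply: prodr_ge0 => i _.
by apply: divr_ge0; rewrite subr_ge0 ler1n expn_gt0 q_gt0.
Qed.

Lemma gbinS q m d :
  gbin q m d.+1 = ((q ^ m)%:R - 1) / ((q ^ d.+1)%:R - 1) * gbin q m.-1 d.
Proof.
rewrite /gbin big_ord_recl !subn0; congr (_ * _); apply: eq_bigr => i _.
by rewrite /= subSS /bump add1n subnS predn_sub.
Qed.

Lemma natrB_expn (R : pzRingType) q a x : (a <= x)%N ->
  (q ^ x)%:R - (q ^ a)%:R = (q ^ a)%:R * ((q ^ (x - a))%:R - 1) :> R.
Proof. by move=> le_ax; rewrite -{1}(subnKC le_ax) expnD natrM mulrBr mulr1. Qed.

End GaussianBinomial.

Section Subspaces.
Variables (K : finFieldType) (n : nat).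
Local Notation V := 'rV[K]_n.
Local Notation q := #|K|.

Definition subspaces_between (A U : {vspace V}) d : {set {vspace V}} :=
  [set W : {vspace V} | [&& (A <= W)%VS, (W <= U)%VS & \dim W == \dim A + d]].

Lemma card_vdiff (A W : {vspace V}) :
  (A <= W)%VS -> #|[predD W & A]| = q ^ \dim W - q ^ \dim A.
Proof.
move=> sAW; rewrite -!card_vspace -(cardID A W).
have -> : #|[predI W & A]| = #|A|.
  by apply: eq_card => v; rewrite !inE andb_idl // => /(subvP sAW).
by rewrite addKn.
Qed.

Lemma dim_addv_line (A : {vspace V}) v :
  v \notin A -> \dim (A + <[v]>) = (\dim A).+1.
Proof.
move=> vA; apply/eqP; rewrite eqn_leq; apply/andP; split.
  rewrite -[(\dim A).+1]addn1 (leq_trans (dimv_add_leqif _ _).1) //.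
  by rewrite leq_add2l dim_vline leq_b1.
by rewrite (ltn_leqif (dimv_leqif_sup (addvSl _ _))) subv_add subvv -memvE.
Qed.

Lemma subspaces_between_line (A U : {vspace V}) d v : v \notin A ->
  [set W in subspaces_between A U d.+1 | v \in W] = subspaces_between (A + <[v]>) U d.
Proof.
move=> vA; apply/setP => W; rewrite !inE dim_addv_line // subv_add -memvE addSnnS.
by case: (v \in W); rewrite ?andbT ?andbF.
Qed.

Lemma card_subspaces_betweenS (A U : {vspace V}) d : (A <= U)%VS ->
  #|subspaces_between A U d.+1| * (q ^ (\dim A + d.+1) - q ^ \dim A) =
  \sum_(v in [predD U & A]) #|subspaces_between (A + <[v]>) U d|.
Proof.
move=> sAU; set X := subspaces_between A U d.+1.
transitivity (\sum_(W in X) #|[predD W & A]|).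
  rewrite -sum_nat_const; apply: eq_bigr => W.
  by rewrite inE => /and3P[sAW _ /eqP <-]; rewrite card_vdiff.
rewrite sum_card_incidence (bigID [predD U & A]) /= addnC big1 => [|v vUA].
  rewrite add0n; apply: eq_bigr => v /andP[vA _].
  rewrite -(subspaces_between_line U d vA); apply: eq_card => W.
  by rewrite !inE unfold_in /= vA.
apply/eqP; rewrite cards_eq0; apply/eqP/setP => W; rewrite !inE unfold_in /=.
apply: contraNF vUA => /and3P[/and3P[_ sWU _] -> vW] /=; exact: subvP sWU _ vW.
Qed.

Lemma card_subspaces_between_le (A U : {vspace V}) d :
  (#|subspaces_between A U d|%:R <= gbin q (\dim U - \dim A) d :> rat)%R.
Proof.
have q_gt1 : (1 < q)%N := card_finNzRing_gt1 K.
elim: d A => [|d IH] A.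
  rewrite /gbin big_ord0 lern1 -(cards1 A); apply: subset_leq_card; apply/subsetP => W.
  by rewrite !inE addn0 => /and3P[sAW _ /eqP dW]; rewrite eq_sym eqEdim sAW dW leqnn.
have [sAU|nsAU] := boolP (A <= U)%VS; last first.
  rewrite (_ : subspaces_between _ _ _ = set0) ?cards0 ?gbin_ge0 ?(ltnW q_gt1) //.
  apply/setP => W; rewrite !inE; apply: contraNF nsAU => /and3P[sAW sWU _].
  exact: subv_trans sWU.
set a := \dim A; set m := \dim U; have le_am : (a <= m)%N := dimvS sAU.
have IH_line (v : V) : v \in [predD U & A] ->
    (#|subspaces_between (A + <[v]>) U d|%:R <= gbin q (m - a).-1 d :> rat)%R.
  by rewrite inE => /andP[vA _]; rewrite -subnS -(dim_addv_line vA) IH.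
have double_count : (#|subspaces_between A U d.+1|%:R * ((q ^ (a + d.+1))%:R - (q ^ a)%:R)
    <= ((q ^ m)%:R - (q ^ a)%:R) * gbin q (m - a).-1 d :> rat)%R.
  rewrite -!natrB ?leq_exp2l ?leq_addr // -natrM card_subspaces_betweenS // natr_sum.
  by rewrite (le_trans (ler_sum _ IH_line)) // sumr_const card_vdiff // mulr_natl.
have qa_gt0 : (0 < (q ^ a)%:R :> rat)%R by rewrite ltr0n expn_gt0 (ltnW q_gt1).
rewrite !natrB_expn ?leq_addr // addKn in double_count.
rewrite gbinS mulrAC ler_pdivlMr ?subr_gt0 ?ltr1n ?(ltn_exp2l 0) //.
by rewrite -(ler_pM2l qa_gt0) mulrCA [X in (_ <= X)%R]mulrA; exact: double_count.
Qed.

Lemma exists_subv_dim (C : {vspace V}) j :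
  j <= \dim C -> exists2 S : {vspace V}, (S <= C)%VS & \dim S = j.
Proof.
move=> le_jC; exists <<take j (vbasis C)>>%VS.
  by apply/span_subvP => v /mem_take /vbasis_mem.
have /catl_free : free (take j (vbasis C) ++ drop j (vbasis C)).
  by rewrite cat_take_drop (basis_free (vbasisP C)).
by move/eqP ->; rewrite size_takel // size_tuple.
Qed.

Lemma dim_capv_gt0 (F G S : {vspace V}) :
  (S <= F)%VS -> \dim F < \dim (F :&: G) + \dim S -> 0 < \dim (S :&: G).
Proof.
move=> sSF lt_F; rewrite -(dimv_sum_cap (F :&: G) S) in lt_F.
have : \dim (F :&: G + S) <= \dim F by apply/dimvS; rewrite subv_add capvSl.
have : \dim (F :&: G :&: S) <= \dim (S :&: G) by apply/dimvS; rewrite capvC capvS ?capvSr.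
lia.
Qed.

End Subspaces.

Section Families.
Variables (K : finFieldType) (n k t : nat) (Fam : {set {vspace 'rV[K]_n}}).
Hypotheses (Fam_uniform : k_uniform Fam k) (Fam_almost : almost_t_intersecting Fam t).
Local Notation V := 'rV[K]_n.
Local Notation lines S := (subspaces_between 0%VS S 1).
Local Notation lines_q := (gbin #|K| (k - t + 1) 1).

Lemma tau_le_dim_cover (W : {vspace V}) : t_cover Fam t W -> tau Fam t <= \dim W.
Proof.
by move=> covW; have := bigmin_le_cond n.+1 (fun W => \dim W) covW; rewrite minEnat.
Qed.

Lemma exists_cap_lt_tau (A : {vspace V}) :
  \dim A < tau Fam t -> exists2 F, F \in Fam & \dim (A :&: F) < t.
Proof.
move=> lt_A_tau; have : ~~ t_cover Fam t A.
  by apply: contraTN lt_A_tau => /tau_le_dim_cover; rewrite leqNgt.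
by case/forallPn => F; rewrite negb_imply -ltnNge => /andP[]; exists F.
Qed.

Lemma famA_sub_cover (A F S : {vspace V}) :
    F \in Fam -> (S <= F)%VS -> \dim S = k - t + 1 ->
  fam_A Fam A \subset
    [set G in Fam | \dim (F :&: G) < t] :|: \bigcup_(P in lines S) fam_A Fam (A + P).
Proof.
move=> FFam sSF dS; apply/subsetP => G; rewrite !inE => /andP[GFam sAG].
rewrite GFam /=; case: ltnP => //= le_t_FG.
have le_FG_k : \dim (F :&: G) <= k by rewrite -(Fam_uniform FFam) dimvS ?capvSl.
have [|P sP_SG dP] := @exists_subv_dim _ _ (S :&: G) 1.
  by apply: dim_capv_gt0 sSF _; rewrite Fam_uniform // dS; lia.
apply/bigcupP; exists P; rewrite !inE.
  by rewrite sub0v dimv0 dP (subv_trans sP_SG (capvSl _ _)).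
by rewrite GFam subv_add sAG (subv_trans sP_SG (capvSr _ _)).
Qed.

Lemma card_famA_branch (A : {vspace V}) : t <= k -> \dim A < tau Fam t ->
  exists S : {vspace V}, [/\ (A :&: S = 0)%VS, \dim S = k - t + 1 &
    #|fam_A Fam A| <= 1 + \sum_(P in lines S) #|fam_A Fam (A + P)|].
Proof.
move=> le_t_k /exists_cap_lt_tau[F FFam lt_AF_t].
have : k - t + 1 <= \dim (F :\: A).
  by have := dimv_cap_compl F A; rewrite (capvC F A) (Fam_uniform FFam); lia.
case/exists_subv_dim => S sSC dS; exists S; split => //.
  by apply/eqP; rewrite -subv0 -(capv_diff F A) capvC capvS.
rewrite (leq_trans (subset_leq_card (famA_sub_cover A FFam _ dS))) //.
  exact: subv_trans sSC (diffvSl F A).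
apply: leq_trans (leq_card_setU _ _).1 _.
exact: leq_add (Fam_almost FFam) (card_bigcup_le _ _).
Qed.

Lemma card_famA_le d (A : {vspace V}) :
    t <= k -> k <= n -> tau Fam t <= k -> \dim A + d = tau Fam t ->
  (#|fam_A Fam A|%:R <=
    lines_q ^+ d * gbin #|K| (n - tau Fam t) (k - tau Fam t)
    + \sum_(i < d) lines_q ^+ i :> rat)%R.
Proof.
move=> le_t_k le_k_n le_tau_k; elim: d A => [|d IH] A dA.
  rewrite expr0 mul1r big_ord0 addr0; rewrite addn0 in dA.
  have := card_subspaces_between_le A fullv (k - tau Fam t).
  rewrite dimvf dim_matrix mul1r dA; apply: le_trans; rewrite ler_nat.
  apply: subset_leq_card; apply/subsetP => F.
  by rewrite !inE => /andP[FFam ->]; rewrite subvf (Fam_uniform FFam) dA subnKC /=.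
set c := lines_q; set N := gbin #|K| (n - tau Fam t) (k - tau Fam t).
set B := (c ^+ d * N + \sum_(i < d) c ^+ i)%R in IH.
have lt_A_tau : \dim A < tau Fam t by rewrite -dA addnS leq_addr.
have [S [SA0 dS card_le]] := card_famA_branch le_t_k lt_A_tau.
have IH_lines P : P \in lines S -> (#|fam_A Fam (A + P)|%:R <= B :> rat)%R.
  rewrite inE dimv0 add0n => /and3P[_ sPS /eqP dP]; apply: IH.
  rewrite -dA dimv_disjoint_sum ?dP ?addn1 ?addSnnS //.
  by apply/eqP; rewrite -subv0 -SA0 capvS.
have B_ge0 : (0 <= B)%R.
  have q_gt0 : (0 < #|K|)%N by rewrite ltnW ?card_finNzRing_gt1.
  by rewrite addr_ge0 ?mulr_ge0 ?sumr_ge0 // => *; rewrite ?exprn_ge0 ?gbin_ge0.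
have lines_le : (#|lines S|%:R <= c :> rat)%R.
  by have := card_subspaces_between_le 0%VS S 1; rewrite dS dimv0 subn0.
have -> : (c ^+ d.+1 * N + \sum_(i < d.+1) c ^+ i = 1 + c * B)%R.
  rewrite /B big_ord_recl mulrDr mulr_sumr exprS; under eq_bigr do rewrite exprS.
  ring.
rewrite -(ler_nat rat) natrD natr_sum in card_le; apply: le_trans card_le _.
rewrite lerD2l (le_trans (ler_sum _ IH_lines)) // sumr_const -mulr_natl.
exact: ler_wpM2r.
Qed.

End Families.

Local Open Scope ring_scope.

Theorem corollary3p4 (K : finFieldType) (n k t : nat)
    (Fam : {set {vspace 'rV[K]_n}}) (A : {vspace 'rV[K]_n}) :
  (0 < t)%N -> (t.+1 <= k)%N -> (2 * k <= n)%N ->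
  k_uniform Fam k ->
  almost_t_intersecting Fam t ->
  (\dim A < tau Fam t)%N -> (tau Fam t <= k)%N ->
  (#|fam_A Fam A|)%:R <=
    gbin #|K| (k - t + 1) 1 ^+ (tau Fam t - \dim A)
      * gbin #|K| (n - tau Fam t) (k - tau Fam t)
    + \sum_(i < tau Fam t - \dim A) gbin #|K| (k - t + 1) 1 ^+ i :> rat.
Proof.
(* [0 < t] already follows from [\dim A < tau Fam t]; of [2 * k <= n] only
   [k <= n] is used. *)
move=> _ lt_t_k le_2k_n uniform almost lt_A_tau le_tau_k.
have le_k_n : (k <= n)%N by lia.
apply: card_famA_le uniform almost _ _ (ltnW lt_t_k) le_k_n le_tau_k _.
exact: subnKC (ltnW lt_A_tau).
Qed.
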